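(* With the notation of the context, if $r=\min_h d_h=2$, then the asymptotic threshold satisfies $$G^*(\mathcal C,\boldsymbol\Lambda)\le\frac{k}{2\mathcal B_2},\qquad \mathcal B_2=\sum_{h:\,d_h=2}\Lambda_hB^{(h)}_2,$$ where $B^{(h)}_2$ is the number of weight-2 codewords of $\mathscr C_h$. In particular, for IRSA ($k=1$, $\mathscr C_h$ the length-$h$ repetition code) $G^*(\mathcal C,\boldsymbol\Lambda)\le 1/(2\Lambda_2)$.
   Context: For $h=1,\dots,\theta$, $\mathscr C_h$ is an $(n_h,k)$ binary linear code with minimum distance $d_h\ge2$ and no idle symbols, chosen with probability $\Lambda_h$; $\bar n=\sum_h\Lambda_hn_h$, $R=k/\bar n$. Un-normalized information function $\tilde e^{(h)}_g$: sum over all $g$-subsets of columns of a generator matrix of $\mathscr C_h$ of the rank of the corresponding submatrix ($\tilde e_0=0$). For $G\ge0$ define the recursion $p_\ell=1-\exp\{-\frac{G}{k}\sum_h\Lambda_h\sum_{t=0}^{n_h-1}p_{\ell-1}^t(1-p_{\ell-1})^{n_h-1-t}[(n_h-t)\tilde e^{(h)}_{n_h-t}-(t+1)\tilde e^{(h)}_{n_h-1-t}]\}$, $p_0=1-e^{-G/R}$. The asymptotic threshold is $G^*(\mathcal C,\boldsymbol\Lambda)=\sup\{G\ge0: p_\ell\to0\text{ as }\ell\to\infty\}$. *)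

From Stdlib Require Import Reals.
From HB Require Import structures.
From mathcomp Require Import all_boot all_order all_algebra.

Set Implicit Arguments.
Unset Strict Implicit.
Unset Printing Implicit Defensive.

Local Open Scope ring_scope.

Definition wt (n : nat) (c : 'rV['F_2]_n) : nat := #|[set j : 'I_n | c ord0 j != 0]|.

Definition is_codeword (k n : nat) (G : 'M['F_2]_(k, n)) (c : 'rV['F_2]_n) : bool :=
  (c <= G)%MS.

(* Minimum distance: least weight of a nonzero codeword (n.+1 if none exists). *)
Definition dmin (k n : nat) (G : 'M['F_2]_(k, n)) : nat :=
  find (fun d => [exists c : 'rV['F_2]_n, [&& c != 0, is_codeword G c & wt c == d]])
       (iota 0%N n.+1).

Definition Bw (k n : nat) (G : 'M['F_2]_(k, n)) (w : nat) : nat :=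
  #|[set c : 'rV['F_2]_n | is_codeword G c && (wt c == w)]|.

Definition colsubset (k n : nat) (G : 'M['F_2]_(k, n)) (S : {set 'I_n}) : 'M['F_2]_(k, #|S|) :=
  colsub (fun i : 'I_#|S| => enum_val i) G.

(* Un-normalized information function e~_g. *)
Definition info (k n : nat) (G : 'M['F_2]_(k, n)) (g : nat) : nat :=
  \sum_(S : {set 'I_n} | #|S| == g) \rank (colsubset G S).

Definition no_idle (k n : nat) (G : 'M['F_2]_(k, n)) : Prop :=
  forall j : 'I_n, col j G != 0.

Local Close Scope ring_scope.
Local Open Scope R_scope.

Definition Rsum (m : nat) (F : 'I_m -> R) : R := \big[Rplus/R0]_(i < m) F i.

Definition nbar (theta : nat) (n : 'I_theta -> nat) (Lam : 'I_theta -> R) : R :=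
  Rsum (fun h => Lam h * INR (n h)).

Definition Phi (theta k : nat) (n : 'I_theta -> nat)
  (Gm : forall h : 'I_theta, 'M['F_2]_(k, n h)) (Lam : 'I_theta -> R) (p : R) : R :=
  Rsum (fun h => Lam h *
    Rsum (fun t : 'I_(n h) =>
      p ^ t * (1 - p) ^ (n h - 1 - t) *
      (INR ((n h - t) * info (Gm h) (n h - t))
       - INR ((t + 1) * info (Gm h) (n h - 1 - t))))).

Fixpoint pseq (theta k : nat) (n : 'I_theta -> nat)
  (Gm : forall h : 'I_theta, 'M['F_2]_(k, n h)) (Lam : 'I_theta -> R) (G : R) (l : nat) : R :=
  match l with
  | O => 1 - exp (- (G / (INR k / nbar n Lam)))
  | S l' => 1 - exp (- (G / INR k) * Phi Gm Lam (pseq Gm Lam G l'))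
  end.

(* Set whose supremum is the asymptotic threshold G*. *)
Definition threshold_set (theta k : nat) (n : 'I_theta -> nat)
  (Gm : forall h : 'I_theta, 'M['F_2]_(k, n h)) (Lam : 'I_theta -> R) : R -> Prop :=
  fun G => 0 <= G /\ Un_cv (pseq Gm Lam G) 0.

Definition calB2 (theta k : nat) (n : 'I_theta -> nat)
  (Gm : forall h : 'I_theta, 'M['F_2]_(k, n h)) (Lam : 'I_theta -> R) : R :=
  Rsum (fun h => if dmin (Gm h) == 2%N then Lam h * INR (Bw (Gm h) 2) else 0).

(* IRSA: index i : 'I_theta is the length-(i+2) repetition code (degree i+2). *)
Definition irsa_len (theta : nat) (i : 'I_theta) : nat := (i + 2)%N.
Definition rep_code (theta : nat) (i : 'I_theta) : 'M['F_2]_(1, irsa_len i) :=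
  const_mx (GRing.one 'F_2).

From Stdlib Require Import Reals Lra Psatz.
From HB Require Import structures.
From mathcomp Require Import all_boot all_order all_algebra.
From mathcomp Require Import zify.

(* Write the recursion as p_{l+1} = f(p_l) with f(p) = 1 - exp(-(G/k) Phi(p)).  The column-rank function of a generator matrix is
      monotone; hence every coefficient of the polynomial Phi is nonnegative
      ((n-m) e_m <= (m+1) e_(m+1)).  If the code has rank k and minimum distance
      at least 2, every (n-1)-set of columns has full rank, so e_(n-1) = n k,
      while each weight-2 codeword yields a rank-deficient (n-2)-set, so
      e_(n-2) + B_2 <= C(n,2) k.  Together: the coefficient of p in the
      contribution of the code is at least 2 B_2.
   2. Consequently Phi(p) >= 2 B_2 p (1 - N p) on [0,1], with B_2 the averaged
      number of weight-2 codewords, and Phi(p) > 0 on (0,1].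
   3. Analysis.  If G > k / (2 B_2) the gain (G/k) 2 B_2 exceeds 1, so f(p) >= p
      on some interval (0,d).  A positive sequence driven by such a map is
      eventually nondecreasing once it enters (0,d), hence cannot tend to 0.
   The IRSA corollary instantiates the general bound with repetition codes,
   for which only the length-2 code has weight-2 codewords (exactly one). *)

Set Implicit Arguments.
Unset Strict Implicit.
Unset Printing Implicit Defensive.
Import GRing.Theory.

Local Open Scope ring_scope.

Lemma F2_nz1 (x : 'F_2) : x != 0 -> x = 1.
Proof. by case: x => [[|[|m]] Hm] //= _; apply: val_inj. Qed.

Section ColumnRank.
Variables (k n : nat) (G : 'M['F_2]_(k, n)).

Definition rk (S : {set 'I_n}) : nat := \rank (colsubset G S).

Lemma colrank_le m1 m2 (A : 'M['F_2]_(k, m1)) (B : 'M['F_2]_(k, m2)) :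
  (forall j, exists i, col j B = col i A) -> (\rank B <= \rank A)%N.
Proof.
move=> cols; rewrite -mxrank_tr -[X in (_ <= X)%N]mxrank_tr; apply: mxrankS.
apply/row_subP => j; have [i colji] := cols j.
by rewrite -tr_col colji tr_col row_sub.
Qed.

Lemma col_colsubset S j : col j (colsubset G S) = col (enum_val j) G.
Proof. by apply/matrixP => a b; rewrite !mxE. Qed.

Lemma rk_mono (S T : {set 'I_n}) : T \subset S -> (rk T <= rk S)%N.
Proof.
move=> TS; apply: colrank_le => j.
have jS : enum_val j \in S by apply: (subsetP TS); apply: enum_valP.
exists (enum_rank_in jS (enum_val j)).
by rewrite !col_colsubset enum_rankK_in.
Qed.

Lemma rk_le_k S : (rk S <= k)%N. Proof. exact: rank_leq_row. Qed.

Lemma rk_le_card S : (rk S <= #|S|)%N. Proof. exact: rank_leq_col. Qed.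

Lemma mul_colsubset (u : 'rV['F_2]_k) (S : {set 'I_n}) i :
  (u *m colsubset G S) 0 i = (u *m G) 0 (enum_val i).
Proof. by rewrite !mxE; apply: eq_bigr => l _; rewrite mxE. Qed.

Lemma rk_lt_codeword (S : {set 'I_n}) : \rank G = k -> (rk S < k)%N ->
  exists c, [/\ c != 0, is_codeword G c & forall j, j \in S -> c 0 j = 0].
Proof.
move=> rG lt_rk.
set M := colsubset G S.
have kerM : kermx M != 0 by rewrite -mxrank_eq0 mxrank_ker -lt0n subn_gt0.
set u := nz_row (kermx M).
have uM : u *m M = 0 by apply/eqP; rewrite -sub_kermx nz_row_sub.
exists (u *m G); split.
- have freeG : row_free G by rewrite /row_free rG.
  by rewrite mulmx_free_eq0 // nz_row_eq0.
- exact: submxMl.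
- move=> j jS; have := @mul_colsubset u S (enum_rank_in jS j).
  by rewrite enum_rankK_in // -/M uM mxE.
Qed.

Lemma codeword_rk_lt (S : {set 'I_n}) c : \rank G = k -> c != 0 ->
  is_codeword G c -> (forall j, j \in S -> c 0 j = 0) -> (rk S < k)%N.
Proof.
move=> rG cnz /submxP [u cE] van.
rewrite ltn_neqAle rk_le_k andbT; apply/negP => /eqP rkS.
have freeS : row_free (colsubset G S) by rewrite /row_free -/(rk S) rkS.
have : u *m colsubset G S == 0.
  apply/eqP/matrixP => a i; rewrite ord1 mul_colsubset -cE van ?mxE //.
  exact: enum_valP.
rewrite mulmx_free_eq0 // => /eqP u0.
by move: cnz; rewrite cE u0 mul0mx eqxx.
Qed.

End ColumnRank.

Section Weights.
Variables (k n : nat) (G : 'M['F_2]_(k, n)).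

Definition zeros (c : 'rV['F_2]_n) : {set 'I_n} := [set j | c 0 j == 0].

Lemma zeros_inj : injective zeros.
Proof.
move=> c c' E; apply/matrixP => a j; rewrite !ord1.
have := congr1 (fun A : {set 'I_n} => j \in A) E; rewrite /= !inE.
case: (eqVneq (c 0 j) 0) => [->|nz]; case: (eqVneq (c' 0 j) 0) => [->|nz'] //=.
by rewrite (F2_nz1 nz) (F2_nz1 nz').
Qed.

Lemma cardC_ord (T : {set 'I_n}) : #|~: T| = (n - #|T|)%N.
Proof. by rewrite -[X in (X - _)%N](card_ord n) -(cardsC T) addKn. Qed.

Lemma card_zeros c : #|zeros c| = (n - wt c)%N.
Proof.
by rewrite /wt -cardC_ord; apply: eq_card => j; rewrite !inE negbK.
Qed.

Lemma wt_le (c : 'rV['F_2]_n) : (wt c <= n)%N.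
Proof. by rewrite /wt (leq_trans (max_card _)) // card_ord. Qed.

Lemma wt0 : wt (0 : 'rV['F_2]_n) = 0%N.
Proof.
rewrite /wt; apply/eqP; rewrite cards_eq0; apply/eqP/setP => j.
by rewrite !inE mxE eqxx.
Qed.

Lemma wt_sub (c : 'rV['F_2]_n) (S : {set 'I_n}) :
  (forall j, j \in S -> c 0 j = 0) -> (wt c <= #|~: S|)%N.
Proof.
move=> van; apply: subset_leq_card; apply/subsetP => j.
by rewrite !inE; apply: contra => jS; rewrite van.
Qed.

Lemma dmin_le (c : 'rV['F_2]_n) : c != 0 -> is_codeword G c -> (dmin G <= wt c)%N.
Proof.
move=> cnz cw; rewrite /dmin leqNgt; apply/negP => lt_wt.
have := before_find 0%N lt_wt; rewrite nth_iota ?ltnS ?wt_le // add0n.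
by move/negbT/negP; apply; apply/existsP; exists c; rewrite cnz cw eqxx.
Qed.

Lemma dmin_ex : (dmin G <= n)%N ->
  exists c, [/\ c != 0, is_codeword G c & wt c = dmin G].
Proof.
rewrite /dmin => le_n.
have found : has (fun d => [exists c : 'rV['F_2]_n,
    [&& c != 0, is_codeword G c & wt c == d]]) (iota 0 n.+1).
  by rewrite has_find size_iota ltnS.
have := nth_find 0%N found; rewrite nth_iota ?ltnS // add0n.
by case/existsP => c /and3P [? ? /eqP ?]; exists c.
Qed.

Lemma dmin_le_size : (dmin G <= n.+1)%N.
Proof. by rewrite /dmin (leq_trans (find_size _ _)) // size_iota. Qed.

Lemma dmin2_facts : no_idle G -> dmin G = 2%N ->
  [/\ (2 <= n)%N, (0 < Bw G 2)%N & (0 < k)%N].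
Proof.
move=> ni d2.
have [c [cnz cw wc]] : exists c, [/\ c != 0, is_codeword G c & wt c = dmin G].
  apply: dmin_ex; rewrite d2 leqNgt; apply/negP => n_lt2.
  have n0 : (0 < n)%N by have := dmin_le_size; rewrite d2.
  have Gnz : G != 0.
    by apply: contraNneq (ni (Ordinal n0)) => ->; rewrite col0.
  have := dmin_le (c := nz_row G) _ (nz_row_sub G); rewrite nz_row_eq0 Gnz d2.
  by move=> /(_ isT) /leq_trans /(_ (wt_le _)); rewrite leqNgt n_lt2.
split.
- by rewrite -d2 -wc wt_le.
- by rewrite /Bw card_gt0; apply/set0Pn; exists c; rewrite inE cw wc d2 eqxx.
- rewrite lt0n; apply/negP => /eqP k0; move: cw cnz; rewrite /is_codeword.
  suff -> : G = 0 by move=> /submx0null ->; rewrite eqxx.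
  by apply/matrixP => i j; have := ltn_ord i; rewrite {2}k0.
Qed.

End Weights.

Local Close Scope ring_scope.

Section InformationFunction.
Variables (k n : nat) (G : 'M['F_2]_(k, n)).

(* Summing the monotonicity of rk over pairs (T, j) with j outside T gives the
   basic inequality (n - m) e_m <= (m + 1) e_(m+1) of the information function;
   it makes every coefficient of the density-evolution polynomial nonnegative. *)
Lemma info_double m : (n - m) * info G m <= m.+1 * info G m.+1.
Proof.
rewrite /info !big_distrr /=.
have -> : \sum_(T : {set 'I_n} | #|T| == m) (n - m) * rk G T =
          \sum_(T : {set 'I_n} | #|T| == m) \sum_(j in ~: T) rk G T.
  by apply: eq_bigr => T /eqP cT; rewrite sum_nat_const cardC_ord cT.
have rk_drop : \sum_(S : {set 'I_n} | #|S| == m.+1) \sum_(j in S) rk G (S :\ j) <=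
               \sum_(S : {set 'I_n} | #|S| == m.+1) m.+1 * rk G S.
  apply: leq_sum => S /eqP cS; rewrite -{1}cS -sum_nat_const.
  by apply: leq_sum => j _; apply: rk_mono; apply: subD1set.
apply: leq_trans rk_drop; apply: eq_leq.
rewrite (exchange_big_dep predT) //= [RHS](exchange_big_dep predT) //=.
apply: eq_bigr => j _.
rewrite (reindex_onto (fun S => S :\ j) (fun T => j |: T)) /=; last first.
  by move=> T /andP [_]; rewrite in_setC => jT; rewrite setU1K.
apply: eq_bigl => S.
case jS: (j \in S).
  rewrite setD1K // eqxx in_setC setD11 andbT /=.
  by rewrite (cardsD1 j S) jS add1n eqSS.
rewrite andbF; apply/negbTE; apply/negP => /andP [_ /eqP E].
by move: jS; rewrite -E setU11.
Qed.

Lemma sum_card_const m c :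
  \sum_(S : {set 'I_n} | #|S| == m) c = 'C(n, m) * c.
Proof.
rewrite -[n in 'C(n, _)](card_ord n) -card_draws -sum_nat_const.
by apply: eq_bigl => S; rewrite inE.
Qed.

Lemma info0 : info G 0 = 0.
Proof.
rewrite /info big1 // => S /eqP cS; apply/eqP; rewrite -leqn0.
by apply: leq_trans (rk_le_card G S) _; rewrite cS.
Qed.

Lemma info1_pos (j0 : 'I_n) : no_idle G -> 0 < info G 1.
Proof.
move=> ni; rewrite /info (bigD1 [set j0]) ?cards1 //=.
apply: leq_trans (leq_addr _ _); rewrite lt0n mxrank_eq0.
apply/negP => /eqP Z.
have := @col_colsubset k n G [set j0] (enum_rank_in (set11 j0) j0).
rewrite enum_rankK_in ?set11 // Z col0 => E.
by move: (ni j0); rewrite -E eqxx.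
Qed.

(* Minimum distance >= 2: every (n-1)-subset of columns has full rank. *)
Lemma info_top : \rank G = k -> 2 <= dmin G -> 1 <= n -> info G (n - 1) = n * k.
Proof.
move=> rG dG n1.
rewrite /info (eq_bigr (fun _ => k)); last first.
  move=> S /eqP cS; rewrite -/(rk G S).
  suff full : ~~ (rk G S < k) by apply/eqP; rewrite eqn_leq rk_le_k leqNgt full.
  apply/negP => /(rk_lt_codeword rG) [c [cnz cw van]].
  have := leq_trans dG (leq_trans (dmin_le cnz cw) (wt_sub van)).
  by rewrite cardC_ord cS subKn.
by rewrite sum_card_const bin_sub // bin1.
Qed.

(* Each weight-2 codeword is determined by its zero set, an (n-2)-set of
   columns of deficient rank. *)
Lemma Bw2_le_deficient : \rank G = k ->
  Bw G 2 <= #|[set T : {set 'I_n} | (#|T| == n - 2) && (rk G T < k)]|.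
Proof.
move=> rG; rewrite /Bw -(card_in_imset (f := @zeros n) (in2W (@zeros_inj n))).
apply: subset_leq_card; apply/subsetP => T /imsetP [c]; rewrite inE.
move=> /andP [cw /eqP w2] ->; rewrite inE card_zeros w2 eqxx /=.
apply: (codeword_rk_lt rG _ cw); last by move=> j; rewrite inE => /eqP.
by apply: contra_eqN w2 => /eqP ->; rewrite wt0.
Qed.

(* Counting the rank deficit over all (n-2)-sets: e_(n-2) + B_2 <= C(n,2) k. *)
Lemma info_sub2 : \rank G = k -> 2 <= n ->
  info G (n - 2) + Bw G 2 <= 'C(n, 2) * k.
Proof.
move=> rG n2.
have deficient : #|[set T : {set 'I_n} | (#|T| == n - 2) && (rk G T < k)]| =
                 \sum_(T : {set 'I_n} | #|T| == n - 2) (rk G T < k).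
  rewrite -sum1_card big_mkcond [RHS]big_mkcond /=; apply: eq_bigr => T _.
  by rewrite inE; case: (#|T| == n - 2); case: (rk G T < k).
apply: leq_trans (leq_add (leqnn _) (Bw2_le_deficient rG)) _.
rewrite deficient /info -big_split /= -(bin_sub n2) -sum_card_const.
apply: leq_sum => T _; have := rk_le_k G T.
by case: ltnP => lt_rk le_rk; rewrite ?addn1 ?addn0.
Qed.

(* Combining the two: the linear coefficient of the polynomial contributed by
   the code is at least 2 B_2. *)
Lemma info_second_top : \rank G = k -> 2 <= dmin G -> 2 <= n ->
  2 * info G (n - 1 - 1) + 2 * Bw G 2 <= (n - 1) * info G (n - 1).
Proof.
move=> rG dG n2.
rewrite info_top ?(ltnW n2) // -subnDA -mulnDr.
apply: leq_trans (leq_mul (leqnn 2) (info_sub2 rG n2)) _.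
have binom2 : 'C(n, 2) * 2 = n * (n - 1).
  by rewrite (bin_ffact n 2) ffactnS ffactn1 subn1.
by rewrite mulnA [2 * _]mulnC binom2 mulnA [(n - 1) * n]mulnC.
Qed.

End InformationFunction.

Section RepetitionCode.
Variable m : nat.
Local Notation J := (const_mx (GRing.one 'F_2) : 'M['F_2]_(1, m)).

Lemma rep_cw (c : 'rV['F_2]_m) : is_codeword J c -> c = 0%R \/ c = J.
Proof.
case/submxP => u ->.
case: (eqVneq (u 0%R 0%R) 0%R) => [u0|unz]; [left|right];
  apply/matrixP => i j; rewrite !mxE big_ord1 ord1 ?u0 ?(F2_nz1 unz) !mxE.
  by rewrite mul0r.
by rewrite mulr1.
Qed.

Lemma wt_J : wt J = m.
Proof.
rewrite /wt -[RHS](card_ord m); apply: eq_card => j.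
by rewrite !inE mxE oner_neq0.
Qed.

Lemma J_nz : 0 < m -> J != 0%R.
Proof.
move=> m0; apply/negP => /eqP/matrixP/(_ 0%R (Ordinal m0)).
by rewrite !mxE; apply/eqP; rewrite oner_neq0.
Qed.

Lemma rank_J : 0 < m -> \rank J = 1.
Proof. by move=> m0; apply/eqP; rewrite eqn_leq rank_leq_row lt0n mxrank_eq0 J_nz. Qed.

Lemma noidle_J : no_idle J.
Proof.
move=> j; apply/negP => /eqP/matrixP/(_ 0%R 0%R).
by rewrite !mxE; apply/eqP; rewrite oner_neq0.
Qed.

Lemma dmin_J : 2 <= m -> dmin J = m.
Proof.
move=> m2; apply/eqP; rewrite eqn_leq.
have := dmin_le (J_nz (ltnW m2)) (submx_refl J); rewrite wt_J => -> /=.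
rewrite leqNgt; apply/negP => lt_m.
have [c [cnz cw wc]] := dmin_ex (ltnW lt_m).
case: (rep_cw cw) => E; first by move: cnz; rewrite E eqxx.
by move: lt_m; rewrite -wc E wt_J ltnn.
Qed.

Lemma Bw_J : Bw J 2 = (m == 2).
Proof.
rewrite /Bw; case: eqP => [m2|m_ne2].
  suff -> : [set c : 'rV['F_2]_m | is_codeword J c && (wt c == 2)] = [set J].
    by rewrite cards1.
  apply/setP => c; rewrite !inE.
  apply/andP/eqP => [[cw /eqP w2]|->]; last by rewrite /is_codeword submx_refl wt_J m2.
  by case: (rep_cw cw) => // E; move: w2; rewrite E wt0.
apply/eqP; rewrite cards_eq0; apply/eqP/setP => c; rewrite !inE.
apply/negP => /andP [cw /eqP w2].
by case: (rep_cw cw) => E; move: w2; rewrite E ?wt0 ?wt_J.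
Qed.

End RepetitionCode.

Local Open Scope R_scope.

Lemma Rplus_assoc_law : associative Rplus.
Proof. by move=> x y z; rewrite Rplus_assoc. Qed.

HB.instance Definition _ :=
  Monoid.isComLaw.Build R R0 Rplus Rplus_assoc_law Rplus_comm Rplus_0_l.

Lemma Rsum_ge0 m (F : 'I_m -> R) : (forall i, 0 <= F i) -> 0 <= Rsum F.
Proof.
move=> F0; rewrite /Rsum.
by apply: (big_ind (fun x => 0 <= x)) => //; [lra | move=> *; lra].
Qed.

Lemma Rsum_le m (F F' : 'I_m -> R) : (forall i, F i <= F' i) -> Rsum F <= Rsum F'.
Proof. by move=> FF'; rewrite /Rsum; apply: (big_ind2 Rle) => //; [lra | move=> *; lra]. Qed.

Lemma Rsum_scal m (F : 'I_m -> R) c : Rsum (fun i => c * F i) = c * Rsum F.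
Proof.
rewrite /Rsum; apply: (big_ind2 (fun x y => x = c * y)) => //; first by ring.
by move=> x1 x2 y1 y2 -> ->; ring.
Qed.

Lemma Rsum_ge_term m (F : 'I_m -> R) i0 : (forall i, 0 <= F i) -> F i0 <= Rsum F.
Proof.
move=> F0; rewrite /Rsum (bigD1 i0) //=.
have : 0 <= \big[Rplus/R0]_(i < m | i != i0) F i.
  by apply: (big_ind (fun x => 0 <= x)) => //; [lra | move=> *; lra].
by move=> /(Rplus_le_compat_l (F i0)); rewrite Rplus_0_r.
Qed.

Lemma bernoulli_low p m : 0 <= p <= 1 -> 1 - INR m * p <= (1 - p) ^ m.
Proof.
move=> Hp; elim: m => [|m IH]; first by simpl; lra.
rewrite S_INR /=.
have : (1 - p) * (1 - INR m * p) <= (1 - p) * (1 - p) ^ m.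
  by apply: Rmult_le_compat_l; lra.
have := pos_INR m; nra.
Qed.

Lemma one_sub_exp_01 x : 0 < x -> 0 < 1 - exp (- x) < 1.
Proof.
move=> x0; have := exp_pos (- x); have := exp_increasing (- x) 0 ltac:(lra).
rewrite exp_0; lra.
Qed.

(* From exp x >= 1 + x: exp (-x) <= 1 - q as soon as (1 - q)(1 + x) >= 1. *)
Lemma exp_neg_le x q : q < 1 -> 1 <= (1 - q) * (1 + x) -> exp (- x) <= 1 - q.
Proof.
move=> q1 prod1.
have x1 : 0 < 1 + x by nra.
have inv : exp (- x) * exp x = 1 by rewrite exp_Ropp Rinv_l //; apply: Rgt_not_eq; apply: exp_pos.
have : exp (- x) * (1 + x) <= exp (- x) * exp x.
  by apply: Rmult_le_compat_l; [apply: Rlt_le; apply: exp_pos | apply: exp_ineq1_le].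
rewrite inv => le1; apply: (Rmult_le_reg_r (1 + x)) => //; lra.
Qed.

Lemma recursion_map_ge_id (a c N : R) (Ph : R -> R) :
  0 < a -> 1 < a * c -> 0 <= N ->
  (forall p, 0 <= p <= 1 -> c * (p * (1 - N * p)) <= Ph p) ->
  exists2 d, 0 < d & forall p, 0 < p < d -> p <= 1 - exp (- a * Ph p).
Proof.
move=> a0 gain N0 Phlow; set lam := a * c in gain *.
have lam0 : 0 < lam * (N + 1) by apply: Rmult_lt_0_compat; lra.
exists ((lam - 1) / (lam * (N + 1))); first by apply: Rdiv_lt_0_compat; lra.
move=> p [p0 pd].
have small : lam * (N + 1) * p <= lam - 1.
  have E : lam * (N + 1) * ((lam - 1) / (lam * (N + 1))) = lam - 1.
    by field; split; lra.
  by rewrite -E; apply: Rmult_le_compat_l; lra.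
have p1 : p < 1 by nra.
set y := lam * (p * (1 - N * p)).
have yx : y <= a * Ph p.
  by rewrite /y /lam Rmult_assoc; apply: Rmult_le_compat_l; [lra | apply: Phlow; lra].
suff : exp (- (a * Ph p)) <= 1 - p by rewrite Ropp_mult_distr_l; lra.
apply: exp_neg_le => //.
have lam1 : 1 <= lam * ((1 - N * p) * (1 - p)).
  have : 0 <= lam * (N * p * p).
    by apply: Rmult_le_pos; [nra | apply: Rmult_le_pos; nra].
  nra.
have : 1 <= (1 - p) * (1 + y) by rewrite /y; nra.
nra.
Qed.

(* A positive sequence driven by a map lying above the identity on (0, d)
   is nondecreasing once it enters (0, d), so it cannot tend to 0. *)
Lemma no_convergence_to_zero (f : R -> R) (u : nat -> R) (d : R) :
  0 < d -> (forall l, 0 < u l) -> (forall l, u (S l) = f (u l)) ->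
  (forall p, 0 < p < d -> p <= f p) -> ~ Un_cv u 0.
Proof.
move=> d0 upos ustep above cv.
have near0 : forall e, 0 < e -> exists L, forall l, (l >= L)%coq_nat -> u l < e.
  move=> e e0; have [L HL] := cv e e0; exists L => l /HL.
  by rewrite /R_dist Rminus_0_r Rabs_right; [| apply: Rle_ge; apply: Rlt_le].
have [L HL] := near0 d d0.
have grow : forall m, u L <= u (L + m)%nat.
  elim => [|m IH]; first by rewrite addn0; lra.
  rewrite addnS ustep.
  have := above (u (L + m)%nat) (conj (upos _) (HL _ (leP (leq_addr m L)))); lra.
have [L' HL'] := near0 (u L) (upos L).
have := grow L'; have := HL' (L + L')%nat (leP (leq_addl L L')); lra.
Qed.

Section CodePolynomial.
Variables (k n : nat) (G : 'M['F_2]_(k, n)).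

(* Contribution of one code to Phi: Phi p = sum_h Lam_h * code_poly (Gm h) p. *)
Definition code_coef (t : 'I_n) : R :=
  INR ((n - t) * info G (n - t)) - INR ((t + 1) * info G (n - 1 - t)).

Definition code_poly (p : R) : R :=
  Rsum (fun t : 'I_n => p ^ t * (1 - p) ^ (n - 1 - t) * code_coef t).

Lemma code_coef_ge0 t : 0 <= code_coef t.
Proof.
have := info_double G (n - 1 - t); have lt_tn := ltn_ord t.
have -> : (n - (n - 1 - t) = t + 1)%N by lia.
have -> : ((n - 1 - t).+1 = n - t)%N by lia.
by move/leP/le_INR; rewrite /code_coef; lra.
Qed.

Lemma code_term_ge0 p (t : 'I_n) : 0 <= p <= 1 ->
  0 <= p ^ t * (1 - p) ^ (n - 1 - t) * code_coef t.
Proof.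
move=> Hp; apply: Rmult_le_pos; last exact: code_coef_ge0.
by apply: Rmult_le_pos; apply: pow_le; lra.
Qed.

Lemma code_poly_ge0 p : 0 <= p <= 1 -> 0 <= code_poly p.
Proof. by move=> Hp; apply: Rsum_ge0 => t; apply: code_term_ge0. Qed.

(* The top term p^(n-1) e_1 is positive when no symbol is idle. *)
Lemma code_poly_pos p : 0 < p <= 1 -> (1 <= n)%N -> no_idle G -> 0 < code_poly p.
Proof.
move=> Hp n1 ni; have top : (n - 1 < n)%N by lia.
have Hp' : 0 <= p <= 1 by lra.
apply: Rlt_le_trans (Rsum_ge_term (Ordinal top) (fun t => code_term_ge0 t Hp')).
rewrite /code_coef /=.
have -> : (n - 1 - (n - 1) = 0)%N by lia.
have -> : (n - (n - 1) = 1)%N by lia.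
rewrite info0 muln0 /= Rminus_0_r Rmult_1_r mul1n.
apply: Rmult_lt_0_compat; first exact: pow_lt (proj1 Hp).
by apply: lt_0_INR; apply/ltP; apply: info1_pos (Ordinal n1) ni.
Qed.

(* The linear term p (1-p)^(n-2) (coefficient >= 2 B_2) bounds code_poly below. *)
Lemma code_poly_ge_linear p N : 0 <= p <= 1 -> \rank G = k -> (2 <= dmin G)%N ->
  (2 <= n)%N -> INR n <= N -> 2 * INR (Bw G 2) * (p * (1 - N * p)) <= code_poly p.
Proof.
move=> Hp rG dG n2 nN.
apply: Rle_trans (Rsum_ge_term (Ordinal n2) (fun t => code_term_ge0 t Hp)).
rewrite /code_coef /= Rmult_1_r; change (1 + 1)%N with 2%N.
have coef1 : 2 * INR (Bw G 2) <=
    INR ((n - 1) * info G (n - 1)) - INR (2 * info G (n - 1 - 1)).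
  have := le_INR _ _ (leP (info_second_top rG dG n2)).
  by rewrite plus_INR !mult_INR /=; lra.
have bern : 1 - N * p <= (1 - p) ^ (n - 1 - 1).
  apply: Rle_trans (bernoulli_low _ Hp); apply: Rplus_le_compat_l.
  apply: Ropp_le_contravar; apply: Rmult_le_compat_r; first lra.
  by apply: Rle_trans nN; apply: le_INR; apply/leP; lia.
have B0 := pos_INR (Bw G 2).
have pq : 0 <= p * (1 - p) ^ (n - 1 - 1) by apply: Rmult_le_pos; [lra | apply: pow_le; lra].
have : p * (1 - N * p) * (2 * INR (Bw G 2)) <=
       p * (1 - p) ^ (n - 1 - 1) * (2 * INR (Bw G 2)).
  by apply: Rmult_le_compat_r; [lra | apply: Rmult_le_compat_l; lra].
have := Rmult_le_compat_l _ _ _ pq coef1.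
lra.
Qed.

End CodePolynomial.

Section DensityEvolution.
Variables (theta k : nat) (n : 'I_theta -> nat)
  (Gm : forall h : 'I_theta, 'M['F_2]_(k, n h)) (Lam : 'I_theta -> R).
Hypothesis Lam_ge0 : forall h, 0 <= Lam h.

Lemma Phi_code_poly p : Phi Gm Lam p = Rsum (fun h => Lam h * code_poly (Gm h) p).
Proof. by []. Qed.

Lemma Phi_pos h0 p : 0 < Lam h0 -> (1 <= n h0)%N -> no_idle (Gm h0) ->
  0 < p <= 1 -> 0 < Phi Gm Lam p.
Proof.
move=> L0 n1 ni Hp; rewrite Phi_code_poly.
have terms : forall h, 0 <= Lam h * code_poly (Gm h) p.
  by move=> h; apply: Rmult_le_pos => //; apply: code_poly_ge0; lra.
apply: Rlt_le_trans (Rsum_ge_term h0 terms).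
by apply: Rmult_lt_0_compat => //; apply: code_poly_pos.
Qed.

Lemma Phi_ge_linear p : 0 <= p <= 1 ->
  (forall h, \rank (Gm h) = k) -> (forall h, no_idle (Gm h)) ->
  let N := INR (\sum_(h < theta) n h)%N in
  2 * calB2 Gm Lam * (p * (1 - N * p)) <= Phi Gm Lam p.
Proof.
move=> Hp rG ni N; rewrite Phi_code_poly.
have -> : 2 * calB2 Gm Lam * (p * (1 - N * p)) = Rsum (fun h => 2 * (p * (1 - N * p)) *
    (if dmin (Gm h) == 2%N then Lam h * INR (Bw (Gm h) 2) else 0)).
  by rewrite Rsum_scal /calB2; ring.
apply: Rsum_le => h; case: eqP => [d2 | _].
  have [n2 _ _] := dmin2_facts (ni h) d2.
  have nN : INR (n h) <= N by apply: le_INR; apply/leP; rewrite (bigD1 h) //= leq_addr.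
  move: (code_poly_ge_linear Hp (rG h) (eq_leq (esym d2)) n2 nN).
  by move/(Rmult_le_compat_l _ _ _ (Lam_ge0 h)); lra.
rewrite Rmult_0_r; apply: Rmult_le_pos => //; exact: code_poly_ge0.
Qed.

Lemma calB2_pos h0 : 0 < Lam h0 -> no_idle (Gm h0) -> dmin (Gm h0) = 2%N ->
  0 < calB2 Gm Lam.
Proof.
move=> L0 ni d2; have [_ B0 _] := dmin2_facts ni d2.
have terms : forall h,
    0 <= (if dmin (Gm h) == 2%N then Lam h * INR (Bw (Gm h) 2) else 0).
  by move=> h; case: ifP => _; [apply: Rmult_le_pos => //; apply: pos_INR | lra].
apply: Rlt_le_trans (Rsum_ge_term h0 terms).
by rewrite d2 eqxx; apply: Rmult_lt_0_compat => //; apply: lt_0_INR; apply/ltP.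
Qed.

Lemma nbar_pos h0 : 0 < Lam h0 -> (1 <= n h0)%N -> 0 < nbar n Lam.
Proof.
move=> L0 n1.
have terms : forall h, 0 <= Lam h * INR (n h).
  by move=> h; apply: Rmult_le_pos => //; apply: pos_INR.
apply: Rlt_le_trans (Rsum_ge_term h0 terms).
by apply: Rmult_lt_0_compat => //; apply: lt_0_INR; apply/ltP.
Qed.

Lemma pseq_01 G : 0 < G -> 0 < INR k -> 0 < nbar n Lam ->
  (forall p, 0 < p <= 1 -> 0 < Phi Gm Lam p) -> forall l, 0 < pseq Gm Lam G l < 1.
Proof.
move=> G0 k0 nb0 Phi0; elim => [|l IH] /=.
  by apply: one_sub_exp_01; apply: Rdiv_lt_0_compat => //; apply: Rdiv_lt_0_compat.
rewrite -Ropp_mult_distr_l; apply: one_sub_exp_01.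
by apply: Rmult_lt_0_compat; [apply: Rdiv_lt_0_compat | apply: Phi0; lra].
Qed.

End DensityEvolution.

Lemma threshold_upper_bound (theta k : nat) (n : 'I_theta -> nat)
    (Gm : forall h : 'I_theta, 'M['F_2]_(k, n h)) (Lam : 'I_theta -> R) :
  (forall h, \rank (Gm h) = k) -> (forall h, no_idle (Gm h)) ->
  (forall h, 0 <= Lam h) -> (exists h, dmin (Gm h) = 2%N /\ 0 < Lam h) ->
  is_upper_bound (threshold_set Gm Lam) (INR k / (2 * calB2 Gm Lam)).
Proof.
move=> rG ni Lam0 [h0 [d2 L0]] G [_ cv].
have [n2 _ k0] := dmin2_facts (ni h0) d2.
have cB0 := calB2_pos Lam0 L0 (ni h0) d2; set cB := calB2 Gm Lam in cB0 *.
have kpos : 0 < INR k by apply: lt_0_INR; apply/ltP.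
case: (Rle_lt_dec G (INR k / (2 * cB))) => // Gbig; exfalso.
have G0 : 0 < G by apply: Rlt_trans Gbig; apply: Rdiv_lt_0_compat; lra.
have gain : 1 < G / INR k * (2 * cB).
  have E1 : INR k / (2 * cB) * (2 * cB / INR k) = 1 by field; split; lra.
  have E2 : G * (2 * cB / INR k) = G / INR k * (2 * cB) by field; lra.
  rewrite -E1 -E2; apply: Rmult_lt_compat_r => //; apply: Rdiv_lt_0_compat; lra.
have [d d0 above] := recursion_map_ge_id (Rdiv_lt_0_compat _ _ G0 kpos) gain
  (pos_INR _) (fun p Hp => Phi_ge_linear Lam0 Hp rG ni).
have u01 := pseq_01 G0 kpos (nbar_pos Lam0 L0 (ltnW n2))
  (fun p => Phi_pos Lam0 L0 (ltnW n2) (ni h0) (p := p)).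
exact: (no_convergence_to_zero d0 (fun l => proj1 (u01 l)) (fun l => erefl) above cv).
Qed.

Lemma irsa_len2 theta (h i2 : 'I_theta) : nat_of_ord i2 = 0%N ->
  (irsa_len h == 2%N) = (h == i2).
Proof.
move=> i20; rewrite /irsa_len -(inj_eq val_inj) /= i20.
by rewrite -[X in _ == X]add0n eqn_add2r.
Qed.

Lemma calB2_irsa theta (Lam : 'I_theta -> R) (i2 : 'I_theta) :
  nat_of_ord i2 = 0%N -> calB2 (@rep_code theta) Lam = Lam i2.
Proof.
move=> i20; rewrite /calB2 /Rsum (bigD1 i2) //= big1 => [|h /negbTE h_i2].
  by rewrite /rep_code dmin_J ?leq_addl // Bw_J (irsa_len2 _ i20) eqxx /=; ring.
by rewrite /rep_code dmin_J ?leq_addl // (irsa_len2 _ i20) h_i2.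
Qed.

Lemma irsa_threshold_upper_bound theta (Lam : 'I_theta -> R) (i2 : 'I_theta) :
  nat_of_ord i2 = 0%N -> (forall h, 0 <= Lam h) -> 0 < Lam i2 ->
  is_upper_bound (threshold_set (@rep_code theta) Lam) (1 / (2 * Lam i2)).
Proof.
move=> i20 Lam0 L0; rewrite -(calB2_irsa Lam i20).
apply: threshold_upper_bound => // [h|h|].
- exact/rank_J/ltnW/leq_addl.
- exact: noidle_J.
- exists i2; split => //.
  by rewrite /rep_code dmin_J ?leq_addl //; apply/eqP; rewrite (irsa_len2 _ i20).
Qed.

Theorem mainTheorem6 :
  (forall (theta k : nat) (n : 'I_theta -> nat)
     (Gm : forall h : 'I_theta, 'M['F_2]_(k, n h)) (Lam : 'I_theta -> R),
     (forall h, \rank (Gm h) = k) ->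
     (forall h, no_idle (Gm h)) ->
     (forall h, (2 <= dmin (Gm h))%N) ->
     (forall h, 0 <= Lam h) ->
     Rsum Lam = 1 ->
     (exists h, dmin (Gm h) = 2%N /\ 0 < Lam h) ->
     is_upper_bound (threshold_set Gm Lam) (INR k / (2 * calB2 Gm Lam)))
  /\
  (forall (theta : nat) (Lam : 'I_theta -> R) (i2 : 'I_theta),
     nat_of_ord i2 = 0%N ->
     (forall h, 0 <= Lam h) ->
     Rsum Lam = 1 ->
     0 < Lam i2 ->
     is_upper_bound (threshold_set (@rep_code theta) Lam) (1 / (2 * Lam i2))).
Proof.
split.
- move=> theta k n Gm Lam rG ni _ Lam0 _; exact: threshold_upper_bound.
- move=> theta Lam i2 i20 Lam0 _; exact: irsa_threshold_upper_bound.
Qed.
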